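(* Let $I=(N,A,V)$ be an instance with $n=|N|$ agents and additive valuations with externalities. Suppose there is a set $A^t\subseteq A$ of items all of the same type, with $|A^t|$ divisible by $n$. If the reduced instance $I'=(N,A\setminus A^t,V)$ admits an EF1 complete allocation, then $I$ admits an EF1 complete allocation.
   Context: An allocation $\pi=(\pi_1,\dots,\pi_n)$ consists of pairwise disjoint bundles (complete if they cover the item set); $\pi(a)$ is the agent receiving item $a$; $V_i(j,a)\in\mathbb{R}$ is agent $i$'s value when item $a$ goes to $j$; $V_i(\pi)=\sum_{a\text{ assigned in }\pi}V_i(\pi(a),a)$; $\pi^{i\leftrightarrow j}$ swaps the bundles of $i$ and $j$. A complete allocation $\pi$ is EF1 if for all $i,j\in N$ there exist $C$ with $|C|\le1$ and the allocation $\lambda$ with $\lambda_\ell=\pi_\ell\setminus C$ for all $\ell$ such that $V_i(\lambda)\ge V_i(\lambda^{i\leftrightarrow j})$. Let $\Delta_{ij}(a)=V_i(i,a)-V_i(j,a)$. Two items $a,b$ are of the same type if $\Delta_{ij}(a)=\Delta_{ij}(b)$ for all $i,j\in N$. *)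

From HB Require Import structures.
From mathcomp Require Import all_boot all_order all_algebra.
Set Implicit Arguments. Unset Strict Implicit. Unset Printing Implicit Defensive.
Import Order.TTheory GRing.Theory Num.Theory.
Local Open Scope ring_scope.

Section Defs.
Variables (R : realFieldType) (N A : finType).

(* Agents are the elements of N, items the elements of A.
   V i j a = value for agent i when item a goes to agent j. *)
Definition valuation := N -> N -> A -> R.

(* An allocation: pi a = Some j if item a is in bundle pi_j, None if a is
   unassigned. Bundles are pairwise disjoint by construction. *)
Definition allocation := A -> option N.

Definition complete_on (S : {set A}) (pi : allocation) : Prop :=
  forall a, (a \in S) <-> (pi a != None).

Definition value (V : valuation) (i : N) (pi : allocation) : R :=
  \sum_(a : A) match pi a with Some j => V i j a | None => 0 end.

Definition swap_bundles (i j : N) (pi : allocation) : allocation :=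
  fun a => match pi a with
           | Some k => Some (if k == i then j else if k == j then i else k)
           | None => None
           end.

Definition remove_items (C : {set A}) (pi : allocation) : allocation :=
  fun a => if a \in C then None else pi a.

Definition EF1 (V : valuation) (S : {set A}) (pi : allocation) : Prop :=
  complete_on S pi /\
  forall i j : N, exists C : {set A}, (#|C| <= 1)%N /\
    value V i (swap_bundles i j (remove_items C pi))
      <= value V i (remove_items C pi).

Definition Delta (V : valuation) (i j : N) (a : A) : R := V i i a - V i j a.

Definition same_type (V : valuation) (T : {set A}) : Prop :=
  forall a b, a \in T -> b \in T -> forall i j : N, Delta V i j a = Delta V i j b.

End Defs.

From HB Require Import structures.
From mathcomp Require Import all_boot all_order all_algebra.
Set Implicit Arguments. Unset Strict Implicit. Unset Printing Implicit Defensive.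
Import Order.TTheory GRing.Theory Num.Theory.

Local Open Scope ring_scope.

(* Give every agent exactly |A^t|/n items of A^t and keep the EF1 allocation on
   the remaining items, removing the same item as before whenever it lies
   outside A^t. For agent i comparing her bundle with j's, an item a changes
   V_i(pi) - V_i(pi^{i<->j}) by Delta_ij(a) if it belongs to i, by -Delta_ij(a)
   if it belongs to j, and not at all otherwise. Since Delta_ij is constant on
   A^t and i and j hold equally many items of A^t, the items of A^t contribute
   nothing, so the EF1 inequality is inherited from the reduced instance. *)

Lemma exists_equal_fibers (N S : finType) :
  (#|N| %| #|S|)%N ->
  exists f : S -> N, forall x, #|[set s | f s == x]| = (#|S| %/ #|N|)%N.
Proof.
move=> dvd_NS; set k := (#|S| %/ #|N|)%N.
have cardS : #|S| = #|{: N * 'I_k}| by rewrite card_prod card_ord mulnC divnK.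
pose g (s : S) : N * 'I_k := enum_val (cast_ord cardS (enum_rank s)).
have g_bij : bijective g.
  exists (fun p => enum_val (cast_ord (esym cardS) (enum_rank p))) => [s|p].
    by rewrite /g enum_valK cast_ordK enum_rankK.
  by rewrite /g enum_valK cast_ordKV enum_rankK.
exists (fun s => (g s).1) => x.
have -> : [set s | (g s).1 == x] = g @^-1: [set p | p.1 == x].
  by apply/setP => s; rewrite !inE.
rewrite on_card_preimset; last exact: onW_bij.
have -> : [set p : N * 'I_k | p.1 == x] = setX [set x] [set: 'I_k].
  by apply/setP => -[y t]; rewrite !inE andbT.
by rewrite cardsX cards1 cardsT card_ord mul1n.
Qed.

Lemma complete_on_notin (N A : finType) (S : {set A}) (pi : allocation N A) a :
  complete_on S pi -> a \notin S -> pi a = None.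
Proof. by move=> pi_on aS; apply/eqP/negPn/negP => /pi_on; apply/negP. Qed.

Section Extension.
Variables (N A : finType) (T : {set A}) (f : {x in T} -> N).

Definition extend_alloc (pi : allocation N A) : allocation N A :=
  fun a => if insub a is Some s then Some (f s) else pi a.

Lemma complete_on_extend_alloc pi :
  complete_on (~: T) pi -> complete_on [set: A] (extend_alloc pi).
Proof.
move=> pi_on a; rewrite in_setT /extend_alloc; split=> // _.
by case: insubP => // aT; apply/pi_on; rewrite inE aT.
Qed.

Lemma remove_items_extend_alloc C pi a :
  remove_items (C :\: T) (extend_alloc pi) a = extend_alloc (remove_items C pi) a.
Proof.
rewrite /remove_items /extend_alloc in_setD.
by case: insubP => [s -> _|/negbTE->]; rewrite ?andbF ?andbT.
Qed.

End Extension.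

Section SwapGain.
Variables (R : realFieldType) (N A : finType) (V : valuation R N A) (i j : N).

Definition swap_gain (o : option N) (a : A) : R :=
  if o is Some k then Delta V i j a * ((k == i)%:R - (k == j)%:R) else 0.

Lemma value_sub_swap (pi : allocation N A) :
  value V i pi - value V i (swap_bundles i j pi) = \sum_a swap_gain (pi a) a.
Proof.
rewrite /value -sumrB; apply: eq_bigr => a _; rewrite /swap_bundles /swap_gain /Delta.
case: (pi a) => [k|]; last by rewrite subr0.
have [->|ki] := eqVneq k i.
  have [->|ij] := eqVneq i j; first by rewrite !subrr mul0r.
  by rewrite subr0 mulr1.
have [->|kj] := eqVneq k j; first by rewrite sub0r mulrN1 opprB.
by rewrite !subrr mulr0.
Qed.

Lemma swap_le_value (pi : allocation N A) :
  (value V i (swap_bundles i j pi) <= value V i pi) = (0 <= \sum_a swap_gain (pi a) a).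
Proof. by rewrite -value_sub_swap subr_ge0. Qed.

Lemma sum_swap_gain_balanced (T : {set A}) (f : {x in T} -> N) :
  same_type V T -> #|[set s | f s == i]| = #|[set s | f s == j]| ->
  \sum_(s : {x in T}) swap_gain (Some (f s)) (val s) = 0.
Proof.
move=> sameT eq_fibers; have [s0 _|noT] := pickP (@predT {x in T}); last first.
  by rewrite big_pred0.
rewrite /swap_gain; under eq_bigr => s _ do rewrite (sameT _ _ (valP s) (valP s0)).
have fiber_sum k : \sum_(s : {x in T}) ((f s == k)%:R : R) = #|[set s | f s == k]|%:R.
  by rewrite -sum1dep_card natr_sum [RHS]big_mkcond; apply: eq_bigr => s _; case: eqP.
by rewrite -mulr_sumr sumrB !fiber_sum eq_fibers subrr mulr0.
Qed.

Lemma sum_swap_gain_extend (T : {set A}) (f : {x in T} -> N) (pi : allocation N A) :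
  {in T, forall a, pi a = None} ->
  \sum_a swap_gain (extend_alloc f pi a) a =
  \sum_a swap_gain (pi a) a + \sum_(s : {x in T}) swap_gain (Some (f s)) (val s).
Proof.
move=> pi_offT; rewrite (bigID (mem T)) [in RHS](bigID (mem T)) /=.
rewrite [X in _ = X + _ + _]big1 => [|a aT]; last by rewrite pi_offT.
rewrite add0r addrC; congr (_ + _).
- by apply: eq_bigr => a aT; rewrite /extend_alloc insubN.
- by rewrite big_sub; apply: eq_bigr => s _; rewrite /extend_alloc valK.
Qed.

End SwapGain.

Theorem lemma3 (R : realFieldType) (N A : finType) (V : valuation R N A)
  (At : {set A}) :
  same_type V At ->
  (#|N| %| #|At|)%N ->
  (exists pi : allocation N A, EF1 V (~: At) pi) ->
  exists pi : allocation N A, EF1 V [set: A] pi.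
Proof.
move=> sameT dvd_NT [pi [pi_on pi_EF1]].
have [|f fibers] := @exists_equal_fibers N {x in At}; first by rewrite card_sig.
have pi_offT : {in At, forall a, pi a = None}.
  by move=> a aT; apply: complete_on_notin pi_on _; rewrite inE aT.
exists (extend_alloc f pi); split; first exact: complete_on_extend_alloc.
move=> i j; have [C [C_le1 swapC]] := pi_EF1 i j.
exists (C :\: At); split; first exact: leq_trans (subset_leq_card (subsetDl C At)) C_le1.
rewrite swap_le_value; under eq_bigr => a _ do rewrite remove_items_extend_alloc.
rewrite sum_swap_gain_extend => [|a aT]; last by rewrite /remove_items pi_offT // if_same.
by rewrite sum_swap_gain_balanced ?fibers // addr0 -swap_le_value.
Qed.
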